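(* Let $N\geq 1$ be an integer. Then for all $|t|<\pi/2$, \[ t\sec^2 t-\tan t=\sum_{j=1}^{N-1}\frac{2j\cdot 2^{2j+2}(2^{2j+2}-1)|B_{2j+2}|}{(2j+2)!}t^{2j+1}+\kappa_N(t), \] where \[ \kappa_N(t)=\frac{N\cdot 2^{2N+4}t^{2N+1}}{\pi^{2N}}\sum_{k=1}^{\infty}\frac{1}{(2k-1)^{2N}\bigl(\pi^2(2k-1)^2-4t^2\bigr)}+\frac{2^{2N+6}t^{2N+3}}{\pi^{2N}}\sum_{k=1}^{\infty}\frac{1}{(2k-1)^{2N}\bigl(\pi^2(2k-1)^2-4t^2\bigr)^2}. \]
   Context: The Bernoulli numbers $B_n$ are defined by $\frac{t}{e^t-1}=\sum_{n=0}^\infty B_n\frac{t^n}{n!}$ for $|t|<2\pi$. An empty sum is understood to be zero. *)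

From Stdlib Require Import Reals Lra Lia Arith Factorial List.
Open Scope R_scope.

(* B is the sequence of Bernoulli numbers, characterised as in the paper by
   t/(e^t - 1) = sum_{n>=0} B_n t^n / n!   for 0 < |t| < 2 pi
   (at t = 0 the left side is understood as its limit 1; coefficients of a
   power series are determined by its values on a punctured disc). *)
Definition is_bernoulli (B : nat -> R) : Prop :=
  forall t : R, 0 < Rabs t < 2 * PI ->
    infinite_sum (fun n => B n * t ^ n / INR (fact n)) (t / (exp t - 1)).

Definition sum_1_to (m : nat) (f : nat -> R) : R :=
  fold_right Rplus 0 (map f (seq 1 m)).

(* Iterating the doubling formulas cot y + cot (y + PI/2) = 2 cot (2y) and
   1/sin^2 y + 1/sin^2 (y + PI/2) = 4/sin^2 (2y) at t + PI/2 writes tan t and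
   sec^2 t as finite sums over 2^m terms, and Tannery's theorem turns them into
   the partial fractions (c_k = (2k+1) PI)
     tan t = sum_k 8t / (c_k^2 - 4t^2),
     sec^2 t = sum_k (4 / (c_k + 2t)^2 + 4 / (c_k - 2t)^2),
   so that t sec^2 t - tan t = sum_k 64 t^3 / (c_k^2 - 4t^2)^2.
   Expanding the partial fractions of tan t in powers of t gives the Taylor
   coefficients of t tan t as sums over k of c_k^(-2p); comparing t tan t with
   y tanh y = y - 2y/(e^(2y) - 1) + 4y/(e^(4y) - 1) under y = i t identifies
   them with 2^(2p) (2^(2p) - 1) |B_(2p)| / (2p)!.  Finally, for each k, the
   first N - 1 terms of the expansion of 64 t^3 / (c_k^2 - 4t^2)^2 in powers of
   t plus an explicit remainder reproduce it exactly; summing over k gives the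
   theorem, the summed remainders being kappa_N(t). *)

From Stdlib Require Import Reals Lra Lia Arith Factorial List.
From Coquelicot Require Import Coquelicot.
Open Scope R_scope.

Fixpoint psum (f : nat -> R) (n : nat) : R :=
  match n with O => 0 | S n => psum f n + f n end.

Lemma psum_ext f g n : (forall k, (k < n)%nat -> f k = g k) -> psum f n = psum g n.
Proof.
  induction n as [|n IH]; simpl; intros H; [lra|].
  rewrite IH by (intros; apply H; lia). rewrite H by lia. lra.
Qed.

Lemma psum_plus f g n : psum (fun k => f k + g k) n = psum f n + psum g n.
Proof. induction n; simpl; lra. Qed.

Lemma psum_scal c f n : psum (fun k => c * f k) n = c * psum f n.
Proof. induction n as [|n IH]; simpl; [lra|]. rewrite IH; lra. Qed.

Lemma psum_opp f n : psum (fun k => - f k) n = - psum f n.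
Proof. induction n as [|n IH]; simpl; [lra|]. rewrite IH; lra. Qed.

Lemma psum_const c n : psum (fun _ => c) n = INR n * c.
Proof. induction n as [|n IH]; simpl; [lra|]. rewrite IH. destruct n; simpl; lra. Qed.

Lemma psum_add f n m : psum f (n + m) = psum f n + psum (fun k => f (n + k)%nat) m.
Proof.
  induction m as [|m IH]; simpl; [rewrite Nat.add_0_r; lra|].
  rewrite Nat.add_succ_r; simpl; rewrite IH; lra.
Qed.

Lemma psum_shift f n : psum f (S n) = f O + psum (fun k => f (S k)) n.
Proof. induction n as [|n IH]; simpl in *; [lra|]. rewrite IH. lra. Qed.

Lemma psum_rev f n : psum f n = psum (fun k => f (n - 1 - k)%nat) n.
Proof.
  induction n as [|n IH]; [simpl; lra|].
  rewrite (psum_shift (fun k => f (S n - 1 - k)%nat)).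
  replace (S n - 1 - 0)%nat with n by lia.
  simpl psum at 1. rewrite IH, Rplus_comm. f_equal.
  apply psum_ext. intros k _. f_equal. lia.
Qed.

Lemma psum_le f g n : (forall k, (k < n)%nat -> f k <= g k) -> psum f n <= psum g n.
Proof.
  induction n as [|n IH]; simpl; intros H; [lra|].
  specialize (IH (fun k Hk => H k ltac:(lia))). specialize (H n ltac:(lia)). lra.
Qed.

Lemma psum_nonneg f n : (forall k, (k < n)%nat -> 0 <= f k) -> 0 <= psum f n.
Proof. intros H. rewrite <- (Rmult_0_r (INR n)), <- psum_const. now apply psum_le. Qed.

Lemma psum_abs f n : Rabs (psum f n) <= psum (fun k => Rabs (f k)) n.
Proof.
  induction n as [|n IH]; simpl; [rewrite Rabs_R0; lra|].
  eapply Rle_trans; [apply Rabs_triang | lra].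
Qed.

Lemma psum_sum_f_R0 f n : psum f (S n) = sum_f_R0 f n.
Proof. induction n as [|n IH]; simpl in *; [lra|]. rewrite <- IH. simpl. lra. Qed.

Lemma infinite_sum_ext f g l : (forall n, f n = g n) -> infinite_sum f l -> infinite_sum g l.
Proof. rewrite <- !is_series_Reals. apply is_series_ext. Qed.

Lemma infinite_sum_scal c f l : infinite_sum f l -> infinite_sum (fun n => c * f n) (c * l).
Proof. rewrite <- !is_series_Reals. exact (is_series_scal_l c f l). Qed.

Lemma infinite_sum_plus f g lf lg :
  infinite_sum f lf -> infinite_sum g lg -> infinite_sum (fun n => f n + g n) (lf + lg).
Proof. rewrite <- !is_series_Reals. exact (is_series_plus f g lf lg). Qed.

Lemma infinite_sum_minus f g lf lg :
  infinite_sum f lf -> infinite_sum g lg -> infinite_sum (fun n => f n - g n) (lf - lg).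
Proof. rewrite <- !is_series_Reals. exact (is_series_minus f g lf lg). Qed.

Lemma infinite_sum_zero : infinite_sum (fun _ => 0) 0.
Proof.
  intros e He. exists O. intros n _. unfold Rdist.
  rewrite sum_cte, Rmult_0_l, Rminus_0_r, Rabs_R0. lra.
Qed.

Lemma infinite_sum_sum_f_R0 (a : nat -> nat -> R) (l : nat -> R) N :
  (forall j, infinite_sum (a j) (l j)) ->
  infinite_sum (fun k => sum_f_R0 (fun j => a j k) N) (sum_f_R0 l N).
Proof. intros H. induction N; simpl; [apply H | now apply infinite_sum_plus]. Qed.

Lemma infinite_sum_fold_right (a : nat -> nat -> R) (l : nat -> R) s :
  (forall j, infinite_sum (a j) (l j)) ->
  infinite_sum (fun k => fold_right Rplus 0 (map (fun j => a j k) s))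
               (fold_right Rplus 0 (map l s)).
Proof.
  intros H. induction s; simpl; [apply infinite_sum_zero | now apply infinite_sum_plus].
Qed.

Lemma infinite_sum_le f g lf lg :
  (forall n, f n <= g n) -> infinite_sum f lf -> infinite_sum g lg -> lf <= lg.
Proof.
  intros E H1 H2. apply is_lim_seq_Reals in H1. apply is_lim_seq_Reals in H2.
  exact (is_lim_seq_le _ _ _ _ (fun n => sum_Rle f g n (fun i _ => E i)) H1 H2).
Qed.

Lemma infinite_sum_nonneg f l : (forall n, 0 <= f n) -> infinite_sum f l -> 0 <= l.
Proof. intros H Hl. exact (infinite_sum_le _ f _ _ H infinite_sum_zero Hl). Qed.

Lemma infinite_sum_le_bound f l M :
  infinite_sum f l -> (forall n, sum_f_R0 f n <= M) -> l <= M.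
Proof.
  intros H HM. apply is_lim_seq_Reals in H.
  exact (is_lim_seq_le _ _ _ _ HM H (is_lim_seq_const M)).
Qed.

Lemma sum_f_R0_le_infinite_sum f l :
  (forall k, 0 <= f k) -> infinite_sum f l -> forall n, sum_f_R0 f n <= l.
Proof.
  intros Hf Hl n. apply growing_ineq; auto.
  intro k; simpl; specialize (Hf (S k)); lra.
Qed.

Lemma psum_le_infinite_sum f l :
  (forall k, 0 <= f k) -> infinite_sum f l -> forall n, psum f n <= l.
Proof.
  intros Hf Hl [|n]; [simpl; exact (infinite_sum_nonneg f l Hf Hl)|].
  rewrite psum_sum_f_R0. now apply sum_f_R0_le_infinite_sum.
Qed.

Lemma summable_of_bounded f M :
  (forall k, 0 <= f k) -> (forall n, sum_f_R0 f n <= M) -> exists l, infinite_sum f l.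
Proof.
  intros H0 HM.
  destruct (ex_finite_lim_seq_incr (sum_f_R0 f) M) as [l Hl]; auto.
  { intro n; simpl. specialize (H0 (S n)). lra. }
  exists l. now apply is_lim_seq_Reals in Hl.
Qed.

Lemma summable_le f g l :
  (forall n, 0 <= f n <= g n) -> infinite_sum g l -> exists l', infinite_sum f l'.
Proof.
  intros H Hg. destruct (Rseries_CV_comp f g H (exist _ l Hg)) as [l' Hl].
  now exists l'.
Qed.

Lemma summable_inv_sq : exists l, infinite_sum (fun k => / (INR k + 1) ^ 2) l.
Proof.
  apply summable_of_bounded with 2.
  { intros k. apply Rlt_le, Rinv_0_lt_compat, pow_lt. pose proof (pos_INR k); lra. }
  (* telescoping: 1/(n+2)^2 <= 1/(n+1) - 1/(n+2) *)
  assert (H : forall n, sum_f_R0 (fun k => / (INR k + 1) ^ 2) n <= 2 - / (INR n + 1)).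
  { induction n as [|n IH]; [simpl; lra|]. cbn [sum_f_R0]. rewrite S_INR.
    pose proof (pos_INR n).
    assert (/ (INR n + 1 + 1) ^ 2 <= / (INR n + 1) - / (INR n + 1 + 1)).
    { replace (/ (INR n + 1) - / (INR n + 1 + 1))
        with (/ ((INR n + 1) * (INR n + 1 + 1))) by (field; lra).
      apply Rinv_le_contravar; simpl; nra. }
    lra. }
  intros n. specialize (H n).
  assert (0 < / (INR n + 1)) by (apply Rinv_0_lt_compat; pose proof (pos_INR n); lra).
  lra.
Qed.

Lemma summable_of_inv_sq_bound (f : nat -> R) (c : R) :
  (forall k, 0 <= f k <= c * / (INR k + 1) ^ 2) -> exists l, infinite_sum f l.
Proof.
  intros H. destruct summable_inv_sq as [l Hl].
  exact (summable_le f _ (c * l) H (infinite_sum_scal c _ _ Hl)).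
Qed.

(** * Tannery's theorem *)

Lemma cv_uniform_on_initial_segment (a : nat -> nat -> R) (b : nat -> R) K eps :
  (forall k, Un_cv (fun m => a m k) (b k)) -> eps > 0 ->
  exists m1, forall m k, (m1 <= m)%nat -> (k < K)%nat -> Rabs (a m k - b k) < eps.
Proof.
  intros Hc He. induction K as [|K [m1 Hm1]].
  - exists O. intros; lia.
  - destruct (Hc K eps He) as [m2 Hm2].
    exists (max m1 m2). intros m k Hm Hk.
    destruct (Nat.eq_dec k K) as [->|]; [apply Hm2; lia | apply Hm1; lia].
Qed.

Lemma summable_tail_small f l : (forall k, 0 <= f k) -> infinite_sum f l ->
  forall eps, 0 < eps -> exists K, forall n, (K <= n)%nat ->
    psum (fun i => f (K + i)%nat) (n - K) <= eps.
Proof.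
  intros f_nonneg f_sum eps Heps.
  destruct (f_sum eps Heps) as [K0 HK0]. exists (S K0). intros n Hn.
  pose proof (psum_le_infinite_sum f l f_nonneg f_sum n).
  pose proof (psum_add f (S K0) (n - S K0)) as Hs.
  replace (S K0 + (n - S K0))%nat with n in Hs by lia.
  specialize (HK0 K0 ltac:(lia)). unfold Rdist in HK0. rewrite <- psum_sum_f_R0 in HK0.
  apply Rabs_def2 in HK0. lra.
Qed.

Section Tannery.

Variables (a : nat -> nat -> R) (b M : nat -> R) (L : nat -> nat) (C SM : R).
Hypothesis a_cv : forall k, Un_cv (fun m => a m k) (b k).
Hypothesis a_dominated : forall m k, (k < L m)%nat -> Rabs (a m k) <= M k.
Hypothesis M_nonneg : forall k, 0 <= M k.
Hypothesis M_sum : infinite_sum M SM.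
Hypothesis L_unbounded : forall K, exists m0, forall m, (m0 <= m)%nat -> (K <= L m)%nat.
Hypothesis a_sum : forall m, psum (a m) (L m) = C.

Lemma tannery_limit_dominated k : Rabs (b k) <= M k.
Proof.
  apply Rnot_lt_le. intro Hlt.
  destruct (a_cv k (Rabs (b k) - M k) ltac:(lra)) as [m1 Hm1].
  destruct (L_unbounded (S k)) as [m0 Hm0].
  set (m := max m1 m0).
  specialize (Hm1 m ltac:(lia)). specialize (Hm0 m ltac:(lia)).
  specialize (a_dominated m k ltac:(lia)). unfold Rdist in Hm1.
  pose proof (Rabs_triang_inv (b k) (a m k)). rewrite Rabs_minus_sym in Hm1. lra.
Qed.

Theorem tannery : infinite_sum b C.
Proof.
  intros eps Heps.
  destruct (summable_tail_small M SM M_nonneg M_sum (eps/4) ltac:(lra)) as [K M_tail].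
  exists K. intros n Hn. unfold Rdist. rewrite <- psum_sum_f_R0.
  destruct (cv_uniform_on_initial_segment a b K (eps / (4 * INR (S K))) a_cv) as [m1 Hm1].
  { apply Rdiv_lt_0_compat; [lra|]. apply Rmult_lt_0_compat; [lra|]. apply lt_0_INR; lia. }
  destruct (L_unbounded (S (S n))) as [m0 Hm0].
  set (m := max m1 m0). specialize (Hm0 m ltac:(lia)).
  rewrite <- (a_sum m).
  pose proof (psum_add b K (S n - K)) as E1.
  replace (K + (S n - K))%nat with (S n) in E1 by lia.
  pose proof (psum_add (a m) K (L m - K)) as E2.
  replace (K + (L m - K))%nat with (L m) in E2 by lia.
  rewrite E1, E2.
  assert (head : Rabs (psum b K - psum (a m) K) <= eps/4).
  { replace (psum b K - psum (a m) K) with (psum (fun k => b k - a m k) K)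
      by (unfold Rminus; rewrite <- (psum_opp (a m)), <- psum_plus; reflexivity).
    eapply Rle_trans; [apply psum_abs|].
    eapply Rle_trans; [apply (psum_le _ (fun _ => eps / (4 * INR (S K))))|].
    { intros k Hk. rewrite Rabs_minus_sym. left. apply Hm1; lia. }
    rewrite psum_const, S_INR. pose proof (pos_INR K).
    apply Rmult_le_reg_r with (4 * (INR K + 1)); [lra|].
    field_simplify; [nra | lra]. }
  assert (tail_b : Rabs (psum (fun k => b (K + k)%nat) (S n - K)) <= eps/4).
  { eapply Rle_trans; [apply psum_abs|]. eapply Rle_trans; [|apply (M_tail (S n)); lia].
    apply psum_le. intros; apply tannery_limit_dominated. }
  assert (tail_a : Rabs (psum (fun k => a m (K + k)%nat) (L m - K)) <= eps/4).
  { eapply Rle_trans; [apply psum_abs|]. eapply Rle_trans; [|apply (M_tail (L m)); lia].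
    apply psum_le. intros; apply a_dominated; lia. }
  pose proof (Rabs_triang (psum b K - psum (a m) K) (psum (fun k => b (K + k)%nat) (S n - K))).
  pose proof (Rabs_triang (psum b K - psum (a m) K + psum (fun k => b (K + k)%nat) (S n - K))
                          (- psum (fun k => a m (K + k)%nat) (L m - K))).
  rewrite Rabs_Ropp in *.
  replace (psum b K + psum (fun k => b (K + k)%nat) (S n - K) -
     (psum (a m) K + psum (fun k => a m (K + k)%nat) (L m - K)))
   with (psum b K - psum (a m) K + psum (fun k => b (K + k)%nat) (S n - K)
          + - psum (fun k => a m (K + k)%nat) (L m - K)) by ring.
  lra.
Qed.

End Tannery.

Lemma infinite_sum_swap_nonneg (a : nat -> nat -> R) (b : nat -> R) T :
  (forall k n, 0 <= a k n) -> (forall k, infinite_sum (a k) (b k)) -> infinite_sum b T ->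
  exists c, (forall n, infinite_sum (fun k => a k n) (c n)) /\ infinite_sum c T.
Proof.
  intros a_nonneg a_sum b_sum.
  assert (a_le_b : forall k n, a k n <= b k).
  { intros k n. pose proof (psum_le_infinite_sum (a k) (b k) (a_nonneg k) (a_sum k) (S n)).
    pose proof (psum_nonneg (a k) n (fun i _ => a_nonneg k i)). simpl in *. lra. }
  set (c n := Series (fun k => a k n)).
  assert (c_sum : forall n, infinite_sum (fun k => a k n) (c n)).
  { intros n.
    destruct (summable_le (fun k => a k n) b T (fun k => conj (a_nonneg k n) (a_le_b k n)) b_sum)
      as [l Hl].
    unfold c. apply is_series_Reals in Hl. rewrite (is_series_unique _ _ Hl).
    now apply is_series_Reals. }
  assert (c_nonneg : forall n, 0 <= c n)
    by (intros n; exact (infinite_sum_nonneg _ _ (fun k => a_nonneg k n) (c_sum n))).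
  assert (c_partial : forall N, sum_f_R0 c N <= T).
  { intros N. apply (infinite_sum_le (fun k => sum_f_R0 (fun j => a k j) N) b _ _).
    - intros k. now apply sum_f_R0_le_infinite_sum.
    - now apply (infinite_sum_sum_f_R0 (fun j k => a k j)).
    - exact b_sum. }
  destruct (summable_of_bounded c T c_nonneg c_partial) as [l Hl].
  assert (l <= T) by (now apply (infinite_sum_le_bound c)).
  assert (T <= l).
  { apply (infinite_sum_le_bound b); auto. intros K.
    apply (infinite_sum_le (fun n => sum_f_R0 (fun k => a k n) K) c _ _).
    - intros n. apply sum_f_R0_le_infinite_sum; auto.
    - now apply (infinite_sum_sum_f_R0 a b K).
    - exact Hl. }
  exists c. split; auto. replace T with l by lra. exact Hl.
Qed.

Lemma sin_plus_PI2 y : sin (y + PI/2) = cos y.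
Proof. rewrite sin_plus, sin_PI2, cos_PI2. ring. Qed.

Lemma cos_plus_PI2 y : cos (y + PI/2) = - sin y.
Proof. rewrite cos_plus, sin_PI2, cos_PI2. ring. Qed.

Lemma Rpow2_pos m : 0 < 2 ^ m.
Proof. apply pow_lt; lra. Qed.

Lemma INR_pow2 m : INR (2 ^ m) = 2 ^ m.
Proof. now rewrite pow_INR. Qed.

Lemma sin_shift_div_pow2_neq0 x j m :
  sin x <> 0 -> sin ((x + INR j * PI) / 2 ^ m) <> 0.
Proof.
  intros Hx H. apply sin_eq_0_0 in H. destruct H as [k Hk]. apply Hx.
  apply sin_eq_0_1. exists (k * 2 ^ Z.of_nat m - Z.of_nat j)%Z.
  rewrite minus_IZR, mult_IZR, <- pow_IZR, <- INR_IZR_INZ.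
  pose proof (Rpow2_pos m).
  apply (Rmult_eq_compat_r (2 ^ m)) in Hk. field_simplify in Hk; [|lra].
  change (IZR 2) with 2. lra.
Qed.

Lemma doubling_iterate (F : R -> R) lam : lam <> 0 ->
  (forall y, sin (2 * y) <> 0 -> F y + F (y + PI/2) = lam * F (2 * y)) ->
  forall m x, sin x <> 0 ->
  F x = / lam ^ m * psum (fun j => F ((x + INR j * PI) / 2 ^ m)) (2 ^ m).
Proof.
  intros Hl HF m. induction m as [|m IH]; intros x Hx.
  - simpl. replace ((x + 0 * PI) / 1) with x by field. field.
  - rewrite (IH x Hx).
    assert (E : forall j, F ((x + INR j * PI) / 2 ^ m) =
       / lam * (F ((x + INR j * PI) / 2 ^ S m) + F ((x + INR (2 ^ m + j) * PI) / 2 ^ S m))).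
    { intros j. pose proof (Rpow2_pos m).
      pose proof (sin_shift_div_pow2_neq0 x j m Hx) as Hs.
      replace ((x + INR j * PI) / 2 ^ m) with (2 * ((x + INR j * PI) / 2 ^ S m)) in Hs |- *
        by (simpl; field; lra).
      replace ((x + INR (2 ^ m + j) * PI) / 2 ^ S m) with ((x + INR j * PI) / 2 ^ S m + PI / 2).
      - rewrite HF by auto. field; auto.
      - rewrite plus_INR, INR_pow2. simpl. field. lra. }
    rewrite (psum_ext _ _ _ (fun j _ => E j)), psum_scal, psum_plus.
    replace (2 ^ S m)%nat with (2 ^ m + 2 ^ m)%nat by (simpl; lia).
    rewrite psum_add. simpl pow. field. split; auto. now apply pow_nonzero.
Qed.

Definition cot y := cos y / sin y.
Definition inv_sin2 y := / sin y ^ 2.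

Lemma cot_doubling y : sin (2 * y) <> 0 -> cot y + cot (y + PI/2) = 2 * cot (2 * y).
Proof.
  intros H. rewrite sin_2a in H. unfold cot.
  rewrite sin_plus_PI2, cos_plus_PI2, sin_2a, cos_2a.
  assert (sin y <> 0) by (intro E; apply H; rewrite E; ring).
  assert (cos y <> 0) by (intro E; apply H; rewrite E; ring).
  field. auto.
Qed.

Lemma inv_sin2_doubling y :
  sin (2 * y) <> 0 -> inv_sin2 y + inv_sin2 (y + PI/2) = 4 * inv_sin2 (2 * y).
Proof.
  intros H. rewrite sin_2a in H. unfold inv_sin2. rewrite sin_plus_PI2, sin_2a.
  assert (sin y <> 0) by (intro E; apply H; rewrite E; ring).
  assert (cos y <> 0) by (intro E; apply H; rewrite E; ring).
  assert (Hsc : sin y ^ 2 + cos y ^ 2 = 1) by (rewrite <- (sin2_cos2 y); unfold Rsqr; ring).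
  transitivity ((sin y ^ 2 + cos y ^ 2) / (sin y ^ 2 * cos y ^ 2)); [field; auto|].
  rewrite Hsc. field; auto.
Qed.

Lemma cot_periodic z : cot (z + PI) = cot z.
Proof. unfold cot. rewrite neg_sin, neg_cos. unfold Rdiv. rewrite Rinv_opp. ring. Qed.

Lemma inv_sin2_periodic z : inv_sin2 (z + PI) = inv_sin2 z.
Proof. unfold inv_sin2. rewrite neg_sin. f_equal. ring. Qed.

(* The 2^(m+1) points (t + PI/2 + j PI) / 2^(m+1) are, modulo PI, the points
   t / 2^(m+1) +- (2k+1) PI / 2^(m+2) for k < 2^m. *)
Lemma psum_shifted_points_symmetric (F : R -> R) (Fper : forall z, F (z + PI) = F z) m t :
  psum (fun j => F ((t + PI/2 + INR j * PI) / 2 ^ S m)) (2 ^ S m) =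
  psum (fun k => F (t / 2 ^ S m + (2 * INR k + 1) * PI / 2 ^ S (S m))
               + F (t / 2 ^ S m - (2 * INR k + 1) * PI / 2 ^ S (S m))) (2 ^ m).
Proof.
  replace (2 ^ S m)%nat with (2 ^ m + 2 ^ m)%nat by (simpl; lia).
  rewrite psum_add, psum_plus. pose proof (Rpow2_pos m). f_equal.
  - apply psum_ext. intros k _. f_equal. simpl. field. lra.
  - rewrite psum_rev. apply psum_ext. intros k Hk.
    rewrite <- (Fper (t / 2 ^ S m - (2 * INR k + 1) * PI / 2 ^ S (S m))). f_equal.
    rewrite plus_INR, !minus_INR, INR_pow2 by lia. simpl.
    replace (1 + 1) with 2 by ring. field. lra.
Qed.

Definition sinc z := if Req_EM_T z 0 then 1 else sin z / z.

Lemma sin_eq_sinc z : sin z = sinc z * z.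
Proof. unfold sinc. destruct (Req_EM_T z 0) as [->|]; [rewrite sin_0; ring | field; auto]. Qed.

Lemma sinc_opp z : sinc (- z) = sinc z.
Proof.
  unfold sinc. destruct (Req_EM_T (-z) 0); destruct (Req_EM_T z 0); try lra.
  rewrite sin_neg. field; auto.
Qed.

Lemma sinc_bounds_pos z : 0 < z <= 2 -> 1 - z ^ 2 / 6 <= sinc z <= 1.
Proof.
  intros Hz. pose proof PI2_1.
  destruct (sin_bound z 0 ltac:(lra) ltac:(lra)) as [H1 H2].
  unfold sin_approx, sin_term in H1, H2. simpl in H1, H2.
  unfold sinc. destruct (Req_EM_T z 0); [lra|].
  split; apply Rmult_le_reg_r with z; try lra;
    unfold Rdiv; rewrite Rmult_assoc, Rinv_l by lra.
  - field_simplify in H1. field_simplify. lra.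
  - assert (0 < z ^ 3) by (apply pow_lt; lra).
    assert (z ^ 3 * z ^ 2 <= z ^ 3 * 20) by (apply Rmult_le_compat_l; nra).
    field_simplify in H2. replace (z ^ 5) with (z ^ 3 * z ^ 2) in H2 by ring. lra.
Qed.

Lemma sinc_bounds z : Rabs z <= 2 -> 1 - z ^ 2 / 6 <= sinc z <= 1.
Proof.
  intros Hz. destruct (Rtotal_order z 0) as [H|[->|H]].
  - rewrite <- sinc_opp. replace (z ^ 2) with ((- z) ^ 2) by ring.
    apply sinc_bounds_pos. rewrite Rabs_left in Hz; lra.
  - unfold sinc. destruct (Req_EM_T 0 0); [simpl; lra | lra].
  - apply sinc_bounds_pos. rewrite Rabs_right in Hz; lra.
Qed.

Lemma sinc_ge_third z : Rabs z <= PI / 2 -> 1 / 3 <= sinc z.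
Proof.
  intros Hz. pose proof PI_4.
  assert (H2 : Rabs z <= 2) by lra. destruct (sinc_bounds z H2).
  assert (z ^ 2 <= 4) by (unfold Rabs in H2; destruct Rcase_abs; nra).
  lra.
Qed.

Lemma sin_neq0_small a : 0 < Rabs a <= PI / 2 -> sin a <> 0.
Proof.
  intros H. rewrite sin_eq_sinc. pose proof (sinc_ge_third a ltac:(lra)).
  apply Rmult_integral_contrapositive. split; [lra|].
  intros ->. rewrite Rabs_R0 in H. lra.
Qed.

Lemma is_lim_seq_sinc (z : nat -> R) : is_lim_seq z 0 -> is_lim_seq (fun m => sinc (z m)) 1.
Proof.
  intros Hz. pose proof (proj1 (is_lim_seq_Reals _ _) Hz) as Hz'.
  apply (is_lim_seq_le_le_loc (fun m => 1 - z m * z m / 6) _ (fun _ => 1)).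
  - destruct (Hz' 1 Rlt_0_1) as [N HN]. exists N. intros n Hn.
    replace (z n * z n) with (z n ^ 2) by ring.
    apply sinc_bounds. specialize (HN n Hn). unfold R_dist in HN. rewrite Rminus_0_r in HN. lra.
  - replace (Finite 1) with (Finite (1 - 0 * 0 / 6)) by (f_equal; field).
    apply is_lim_seq_minus'; [apply is_lim_seq_const|].
    apply is_lim_seq_div'; [apply is_lim_seq_mult'; auto | apply is_lim_seq_const | lra].
  - apply is_lim_seq_const.
Qed.

Lemma is_lim_seq_div_pow2 (a : R) : is_lim_seq (fun m => a / 2 ^ m) 0.
Proof. apply is_lim_seq_Reals, cv_pow_half. Qed.

Lemma pow2_unbounded K : exists m0, forall m, (m0 <= m)%nat -> (K <= 2 ^ m)%nat.
Proof.
  exists K. intros m Hm. apply Nat.le_trans with (2 ^ K)%nat.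
  - apply Nat.lt_le_incl, Nat.pow_gt_lin_r; lia.
  - apply Nat.pow_le_mono_r; lia.
Qed.

(** * Partial fractions for tan and sec^2 *)

Definition odd_pi k := (2 * INR k + 1) * PI.

Lemma PI_le_odd_pi k : PI <= odd_pi k.
Proof. unfold odd_pi. pose proof (pos_INR k). pose proof PI_RGT_0. nra. Qed.

(* Doubling at t + PI/2, iterated m+1 times and paired as in
   [psum_shifted_points_symmetric], writes tan t and sec^2 t as sums over
   k < 2^m of functions of u m +- w m k; written with [sinc], each term
   visibly tends to the k-th partial fraction as m grows. *)
Section PartialFractions.

Variable t : R.
Hypothesis Ht : Rabs t < PI / 2.

Let u m := t / 2 ^ S m.
Let w m k := (2 * INR k + 1) * PI / 2 ^ S (S m).

Lemma t_bounds : - (PI / 2) < t < PI / 2.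
Proof. apply Rabs_def2 in Ht. lra. Qed.

Lemma cos_t_neq0 : cos t <> 0.
Proof. pose proof t_bounds. apply Rgt_not_eq, cos_gt_0; lra. Qed.

Lemma odd_pi_sq_gt k : 0 < odd_pi k ^ 2 - 4 * t ^ 2.
Proof. pose proof (PI_le_odd_pi k). pose proof PI_RGT_0. pose proof t_bounds. nra. Qed.

Lemma half_angle_bounds m k : (k < 2 ^ m)%nat ->
  0 < w m k - u m < PI / 2 /\ 0 < w m k + u m < PI / 2 /\ Rabs (2 * u m) <= PI / 2.
Proof.
  intros Hk. unfold u, w. pose proof (Rpow2_pos m). pose proof PI_RGT_0. pose proof t_bounds.
  assert (Hk' : INR k + 1 <= 2 ^ m) by (rewrite <- INR_pow2, <- S_INR; apply le_INR; lia).
  pose proof (pos_INR k).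
  simpl pow. repeat split;
    try (apply Rmult_lt_reg_r with (2 * (2 * 2 ^ m)); [lra|]; field_simplify; nra).
  replace (2 * (t / (2 * 2 ^ m))) with (t / 2 ^ m) by (field; lra).
  unfold Rdiv. rewrite Rabs_mult, Rabs_inv, (Rabs_right (2 ^ m)) by lra.
  assert (1 <= 2 ^ m) by (apply pow_R1_Rle; lra).
  apply Rmult_le_reg_r with (2 ^ m); [lra|]. rewrite Rmult_assoc, Rinv_l by lra. nra.
Qed.

Definition tan_term m k :=
  8 * t * sinc (2 * u m) / (sinc (w m k + u m) * sinc (w m k - u m) * (odd_pi k ^ 2 - 4 * t ^ 2)).

Definition sec2_term m k :=
  4 / (sinc (w m k + u m) ^ 2 * (odd_pi k + 2 * t) ^ 2)
  + 4 / (sinc (w m k - u m) ^ 2 * (odd_pi k - 2 * t) ^ 2).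

Lemma cot_pair_eq_tan_term m k : (k < 2 ^ m)%nat ->
  - / 2 ^ S m * (cot (u m + w m k) + cot (u m - w m k)) = tan_term m k.
Proof.
  intros Hk. destruct (half_angle_bounds m k Hk) as [H1 [H2 H3]].
  assert (Sa : sin (u m + w m k) <> 0) by (apply sin_neq0_small; rewrite Rabs_right; lra).
  assert (Sb : sin (u m - w m k) <> 0) by (apply sin_neq0_small; rewrite Rabs_left; lra).
  assert (E : cot (u m + w m k) + cot (u m - w m k) =
     sin (2 * u m) / (sin (u m + w m k) * sin (u m - w m k))).
  { unfold cot. replace (2 * u m) with ((u m + w m k) + (u m - w m k)) by ring.
    rewrite (sin_plus (u m + w m k)). field. auto. }
  rewrite E, (sin_eq_sinc (2 * u m)), (sin_eq_sinc (u m + w m k)), (sin_eq_sinc (u m - w m k)).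
  replace (u m - w m k) with (- (w m k - u m)) by ring. rewrite sinc_opp.
  pose proof (sinc_ge_third (w m k + u m) ltac:(rewrite Rabs_right; lra)).
  pose proof (sinc_ge_third (w m k - u m) ltac:(rewrite Rabs_right; lra)).
  pose proof (odd_pi_sq_gt k). pose proof (PI_le_odd_pi k). pose proof t_bounds.
  unfold tan_term. rewrite (Rplus_comm (u m)).
  unfold u, w, odd_pi in *. simpl pow in *. pose proof (Rpow2_pos m).
  field. repeat split; lra.
Qed.

Lemma inv_sin2_pair_eq_sec2_term m k : (k < 2 ^ m)%nat ->
  / 4 ^ S m * (inv_sin2 (u m + w m k) + inv_sin2 (u m - w m k)) = sec2_term m k.
Proof.
  intros Hk. destruct (half_angle_bounds m k Hk) as [H1 [H2 H3]].
  unfold inv_sin2. rewrite (sin_eq_sinc (u m + w m k)), (sin_eq_sinc (u m - w m k)).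
  replace (u m - w m k) with (- (w m k - u m)) by ring. rewrite sinc_opp.
  pose proof (sinc_ge_third (w m k + u m) ltac:(rewrite Rabs_right; lra)).
  pose proof (sinc_ge_third (w m k - u m) ltac:(rewrite Rabs_right; lra)).
  pose proof (PI_le_odd_pi k). pose proof t_bounds.
  unfold sec2_term. rewrite (Rplus_comm (u m)).
  replace (4 ^ S m) with (2 ^ S m * 2 ^ S m) by (rewrite <- Rpow_mult_distr; f_equal; ring).
  unfold u, w, odd_pi in *. simpl pow in *. pose proof (Rpow2_pos m).
  field. repeat split; lra.
Qed.

Lemma psum_tan_term m : psum (tan_term m) (2 ^ m) = tan t.
Proof.
  assert (E : tan t = - cot (t + PI / 2)).
  { unfold tan, cot. rewrite sin_plus_PI2, cos_plus_PI2. field. apply cos_t_neq0. }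
  rewrite E, (doubling_iterate cot 2 ltac:(lra) cot_doubling (S m) (t + PI/2))
    by (rewrite sin_plus_PI2; apply cos_t_neq0).
  rewrite (psum_shifted_points_symmetric cot cot_periodic m t), <- psum_scal, <- psum_opp.
  apply psum_ext. intros k Hk. rewrite <- cot_pair_eq_tan_term by auto.
  unfold u, w. ring.
Qed.

Lemma psum_sec2_term m : psum (sec2_term m) (2 ^ m) = / cos t ^ 2.
Proof.
  replace (/ cos t ^ 2) with (inv_sin2 (t + PI / 2)) by (unfold inv_sin2; now rewrite sin_plus_PI2).
  rewrite (doubling_iterate inv_sin2 4 ltac:(lra) inv_sin2_doubling (S m) (t + PI/2))
    by (rewrite sin_plus_PI2; apply cos_t_neq0).
  rewrite (psum_shifted_points_symmetric inv_sin2 inv_sin2_periodic m t), <- psum_scal.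
  apply psum_ext. intros k Hk. rewrite <- inv_sin2_pair_eq_sec2_term by auto.
  unfold u, w. ring.
Qed.

Lemma sinc_half_angles_cv k :
  is_lim_seq (fun m => sinc (2 * u m)) 1 /\
  is_lim_seq (fun m => sinc (w m k + u m)) 1 /\
  is_lim_seq (fun m => sinc (w m k - u m)) 1.
Proof.
  pose proof Rpow2_pos.
  repeat split; apply is_lim_seq_sinc.
  - apply is_lim_seq_ext with (fun m => t / 2 ^ m); [|apply is_lim_seq_div_pow2].
    intros m; unfold u; simpl; field. apply Rgt_not_eq, Rpow2_pos.
  - apply is_lim_seq_ext with (fun m => ((2 * INR k + 1) * PI / 4 + t / 2) / 2 ^ m);
      [|apply is_lim_seq_div_pow2].
    intros m; unfold u, w; simpl; field. apply Rgt_not_eq, Rpow2_pos.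
  - apply is_lim_seq_ext with (fun m => ((2 * INR k + 1) * PI / 4 - t / 2) / 2 ^ m);
      [|apply is_lim_seq_div_pow2].
    intros m; unfold u, w; simpl; field. apply Rgt_not_eq, Rpow2_pos.
Qed.

Lemma tan_term_cv k : Un_cv (fun m => tan_term m k) (8 * t / (odd_pi k ^ 2 - 4 * t ^ 2)).
Proof.
  apply is_lim_seq_Reals. destruct (sinc_half_angles_cv k) as [A [B C]].
  set (c := 8 * t / (odd_pi k ^ 2 - 4 * t ^ 2)).
  apply is_lim_seq_ext with
    (fun m => c * (sinc (2 * u m) / (sinc (w m k + u m) * sinc (w m k - u m)))).
  { intros m. unfold tan_term, c, Rdiv. rewrite !Rinv_mult. ring. }
  pose proof (is_lim_seq_mult' _ _ c _ (is_lim_seq_const c)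
    (is_lim_seq_div' _ _ 1 (1 * 1) A (is_lim_seq_mult' _ _ _ _ B C) ltac:(lra))) as HL.
  replace (c * (1 / (1 * 1))) with c in HL by field. exact HL.
Qed.

Lemma sec2_term_cv k :
  Un_cv (fun m => sec2_term m k) (4 / (odd_pi k + 2 * t) ^ 2 + 4 / (odd_pi k - 2 * t) ^ 2).
Proof.
  apply is_lim_seq_Reals. destruct (sinc_half_angles_cv k) as [_ [B C]].
  apply is_lim_seq_ext with
    (fun m => 4 / (odd_pi k + 2 * t) ^ 2 * / sinc (w m k + u m) ^ 2
            + 4 / (odd_pi k - 2 * t) ^ 2 * / sinc (w m k - u m) ^ 2).
  { intros m. unfold sec2_term, Rdiv. rewrite !Rinv_mult. ring. }
  assert (inv_sq_cv : forall z : nat -> R, is_lim_seq z 1 -> is_lim_seq (fun m => / z m ^ 2) 1).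
  { intros z Hz. apply is_lim_seq_ext with (fun m => / (z m * z m)); [intros; f_equal; ring|].
    replace (Finite 1) with (Rbar_inv (Rbar_mult 1 1)) by (simpl; f_equal; field).
    apply is_lim_seq_inv; [now apply is_lim_seq_mult'|]. simpl; intro E; injection E; lra. }
  pose proof (is_lim_seq_plus' _ _ _ _
    (is_lim_seq_mult' _ _ _ _ (is_lim_seq_const (4 / (odd_pi k + 2 * t) ^ 2)) (inv_sq_cv _ B))
    (is_lim_seq_mult' _ _ _ _ (is_lim_seq_const (4 / (odd_pi k - 2 * t) ^ 2)) (inv_sq_cv _ C)))
    as HL.
  rewrite !Rmult_1_r in HL. exact HL.
Qed.

Lemma tan_term_bound m k : (k < 2 ^ m)%nat ->
  Rabs (tan_term m k) <= 72 * Rabs t / (odd_pi k ^ 2 - 4 * t ^ 2).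
Proof.
  intros Hk. destruct (half_angle_bounds m k Hk) as [H1 [H2 H3]].
  pose proof (sinc_ge_third (2 * u m) H3).
  assert (sinc (2 * u m) <= 1) by (apply sinc_bounds; pose proof PI_4; lra).
  pose proof (sinc_ge_third (w m k + u m) ltac:(rewrite Rabs_right; lra)) as Lp.
  pose proof (sinc_ge_third (w m k - u m) ltac:(rewrite Rabs_right; lra)) as Lm.
  pose proof (odd_pi_sq_gt k). pose proof (Rabs_pos t).
  unfold tan_term, Rdiv. rewrite !Rabs_mult, Rabs_inv, !Rabs_mult.
  rewrite (Rabs_right 8), (Rabs_right (sinc (2 * u m))), (Rabs_right (sinc (w m k + u m))),
    (Rabs_right (sinc (w m k - u m))), (Rabs_right (odd_pi k ^ 2 - 4 * t ^ 2)) by lra.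
  rewrite !Rinv_mult.
  assert (inv_le : forall s, 1 / 3 <= s -> / s <= 3)
    by (intros s Hs; replace 3 with (/ (1 / 3)) by field; apply Rinv_le_contravar; lra).
  pose proof (inv_le _ Lp). pose proof (inv_le _ Lm).
  assert (0 < / sinc (w m k + u m)) by (apply Rinv_0_lt_compat; lra).
  assert (0 < / sinc (w m k - u m)) by (apply Rinv_0_lt_compat; lra).
  assert (0 < / (odd_pi k ^ 2 - 4 * t ^ 2)) by (apply Rinv_0_lt_compat; lra).
  set (a := / sinc (w m k + u m)) in *. set (b := / sinc (w m k - u m)) in *.
  set (d := / (odd_pi k ^ 2 - 4 * t ^ 2)) in *. set (s := sinc (2 * u m)) in *.
  assert (a * b <= 9) by nra. assert (s * (a * b) <= 9) by nra.
  assert (0 <= Rabs t * d) by nra.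
  assert (s * (a * b) * (Rabs t * d) <= 9 * (Rabs t * d)) by (apply Rmult_le_compat_r; lra).
  nra.
Qed.

Lemma sec2_term_bound m k : (k < 2 ^ m)%nat ->
  Rabs (sec2_term m k) <= 36 / (odd_pi k + 2 * t) ^ 2 + 36 / (odd_pi k - 2 * t) ^ 2.
Proof.
  intros Hk. destruct (half_angle_bounds m k Hk) as [H1 [H2 H3]].
  pose proof (sinc_ge_third (w m k + u m) ltac:(rewrite Rabs_right; lra)) as Lp.
  pose proof (sinc_ge_third (w m k - u m) ltac:(rewrite Rabs_right; lra)) as Lm.
  pose proof (PI_le_odd_pi k). pose proof t_bounds.
  assert (P1 : 0 < (odd_pi k + 2 * t) ^ 2) by (apply pow_lt; lra).
  assert (P2 : 0 < (odd_pi k - 2 * t) ^ 2) by (apply pow_lt; lra).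
  assert (inv_sq_le : forall s, 1 / 3 <= s -> / s ^ 2 <= 9).
  { intros s Hs. replace 9 with (/ ((1 / 3) ^ 2)) by field.
    apply Rinv_le_contravar; [nra | apply pow_incr; lra]. }
  unfold sec2_term. rewrite Rabs_right.
  2:{ apply Rle_ge, Rplus_le_le_0_compat; apply Rlt_le, Rdiv_lt_0_compat; try lra;
      apply Rmult_lt_0_compat; auto; apply pow_lt; lra. }
  apply Rplus_le_compat; unfold Rdiv; rewrite Rinv_mult, <- Rmult_assoc;
    apply Rmult_le_compat_r; try (apply Rlt_le, Rinv_0_lt_compat; lra);
    [pose proof (inv_sq_le _ Lp) | pose proof (inv_sq_le _ Lm)]; lra.
Qed.

Theorem tan_partial_fractions :
  infinite_sum (fun k => 8 * t / (odd_pi k ^ 2 - 4 * t ^ 2)) (tan t).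
Proof.
  pose proof t_bounds. pose proof PI_RGT_0. pose proof (Rabs_pos t).
  assert (D0 : 0 < PI ^ 2 - 4 * t ^ 2) by nra.
  set (M k := 72 * Rabs t / (odd_pi k ^ 2 - 4 * t ^ 2)).
  assert (M_nonneg : forall k, 0 <= M k).
  { intros k. pose proof (odd_pi_sq_gt k).
    apply Rmult_le_pos; [lra | apply Rlt_le, Rinv_0_lt_compat; lra]. }
  destruct (summable_of_inv_sq_bound M (72 * Rabs t / (PI ^ 2 - 4 * t ^ 2))) as [SM HSM].
  { intros k. split; [apply M_nonneg|]. pose proof (odd_pi_sq_gt k). pose proof (pos_INR k).
    assert ((PI ^ 2 - 4 * t ^ 2) * (INR k + 1) ^ 2 <= odd_pi k ^ 2 - 4 * t ^ 2)
      by (unfold odd_pi; nra).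
    unfold M, Rdiv. rewrite (Rmult_assoc _ (/ (PI ^ 2 - 4 * t ^ 2))), <- Rinv_mult.
    apply Rmult_le_compat_l; [lra|].
    apply Rinv_le_contravar; [apply Rmult_lt_0_compat; [lra | apply pow_lt; lra] | lra]. }
  apply (tannery tan_term _ M (fun m => 2 ^ m)%nat (tan t) SM tan_term_cv);
    auto using tan_term_bound, pow2_unbounded, psum_tan_term.
Qed.

Theorem sec2_partial_fractions :
  infinite_sum (fun k => 4 / (odd_pi k + 2 * t) ^ 2 + 4 / (odd_pi k - 2 * t) ^ 2) (/ cos t ^ 2).
Proof.
  pose proof t_bounds. pose proof PI_RGT_0.
  assert (D0 : 0 < PI - 2 * Rabs t) by lra.
  assert (Hge : forall k, (PI - 2 * Rabs t) * (INR k + 1) <= odd_pi k + 2 * t /\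
                          (PI - 2 * Rabs t) * (INR k + 1) <= odd_pi k - 2 * t).
  { intros k. pose proof (pos_INR k). unfold odd_pi.
    unfold Rabs; destruct Rcase_abs; split; nra. }
  assert (Hinv : forall k z, (PI - 2 * Rabs t) * (INR k + 1) <= z ->
                   36 / z ^ 2 <= 36 / (PI - 2 * Rabs t) ^ 2 * / (INR k + 1) ^ 2).
  { intros k z Hz. pose proof (pos_INR k). unfold Rdiv. rewrite Rmult_assoc.
    apply Rmult_le_compat_l; [lra|]. rewrite <- Rinv_mult. apply Rinv_le_contravar.
    - apply Rmult_lt_0_compat; apply pow_lt; lra.
    - rewrite <- Rpow_mult_distr. apply pow_incr. nra. }
  set (M k := 36 / (odd_pi k + 2 * t) ^ 2 + 36 / (odd_pi k - 2 * t) ^ 2).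
  assert (M_nonneg : forall k, 0 <= M k).
  { intros k. destruct (Hge k). pose proof (pos_INR k).
    assert (0 < (odd_pi k + 2 * t) ^ 2) by (apply pow_lt; nra).
    assert (0 < (odd_pi k - 2 * t) ^ 2) by (apply pow_lt; nra).
    apply Rplus_le_le_0_compat; apply Rlt_le, Rdiv_lt_0_compat; lra. }
  destruct (summable_of_inv_sq_bound M (2 * (36 / (PI - 2 * Rabs t) ^ 2))) as [SM HSM].
  { intros k. split; [apply M_nonneg|]. destruct (Hge k) as [G1 G2].
    pose proof (Hinv k _ G1). pose proof (Hinv k _ G2). unfold M. lra. }
  apply (tannery sec2_term _ M (fun m => 2 ^ m)%nat (/ cos t ^ 2) SM sec2_term_cv);
    auto using sec2_term_bound, pow2_unbounded, psum_sec2_term.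
Qed.

End PartialFractions.

Theorem tsec2_minus_tan_partial_fractions t : Rabs t < PI / 2 ->
  infinite_sum (fun k => 64 * t ^ 3 / (odd_pi k ^ 2 - 4 * t ^ 2) ^ 2) (t * / cos t ^ 2 - tan t).
Proof.
  intros Ht.
  pose proof (infinite_sum_minus _ _ _ _
    (infinite_sum_scal t _ _ (sec2_partial_fractions t Ht)) (tan_partial_fractions t Ht)) as H.
  eapply infinite_sum_ext; [|exact H]. intros k. simpl.
  pose proof (t_bounds t Ht). pose proof (PI_le_odd_pi k). pose proof (odd_pi_sq_gt t Ht k).
  field. repeat split; lra.
Qed.

(** * The Taylor coefficients of t tan t *)

Definition tan_coef n :=
  match n with
  | O => 0
  | S n => Series (fun k => 8 * 4 ^ n / odd_pi k ^ (2 * n + 2))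
  end.

Lemma tan_coef_sum n :
  infinite_sum (fun k => 8 * 4 ^ n / odd_pi k ^ (2 * n + 2)) (tan_coef (S n)).
Proof.
  pose proof PI_RGT_0.
  destruct (summable_of_inv_sq_bound (fun k => 8 * 4 ^ n / odd_pi k ^ (2 * n + 2))
              (8 * 4 ^ n / PI ^ (2 * n + 2))) as [l Hl].
  { intros k. pose proof (pos_INR k).
    assert (Hc : (INR k + 1) * PI <= odd_pi k) by (unfold odd_pi; nra).
    assert (0 < 4 ^ n) by (apply pow_lt; lra).
    assert (0 < odd_pi k ^ (2 * n + 2)) by (apply pow_lt; nra).
    split; [apply Rlt_le, Rdiv_lt_0_compat; lra|].
    assert (Hge : (INR k + 1) ^ 2 * PI ^ (2 * n + 2) <= odd_pi k ^ (2 * n + 2)).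
    { eapply Rle_trans; [|apply pow_incr; split; [|exact Hc]; nra].
      rewrite Rpow_mult_distr. apply Rmult_le_compat_r; [apply pow_le; lra|].
      apply Rle_pow; [lra | lia]. }
    replace (8 * 4 ^ n / PI ^ (2 * n + 2) * / (INR k + 1) ^ 2)
      with (8 * 4 ^ n / ((INR k + 1) ^ 2 * PI ^ (2 * n + 2)))
      by (field; repeat split; try apply pow_nonzero; lra).
    unfold Rdiv. apply Rmult_le_compat_l; [lra|].
    apply Rinv_le_contravar; auto. apply Rmult_lt_0_compat; apply pow_lt; lra. }
  apply is_series_Reals in Hl.
  change (tan_coef (S n)) with (Series (fun k => 8 * 4 ^ n / odd_pi k ^ (2 * n + 2))).
  rewrite (is_series_unique _ _ Hl).
  now apply is_series_Reals.
Qed.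

Lemma tan_coef_nonneg n : 0 <= tan_coef n.
Proof.
  destruct n as [|n]; [simpl; lra|].
  refine (infinite_sum_nonneg _ _ _ (tan_coef_sum n)). intros k.
  pose proof PI_RGT_0. pose proof (PI_le_odd_pi k).
  assert (0 < 4 ^ n) by (apply pow_lt; lra).
  assert (0 < odd_pi k ^ (2 * n + 2)) by (apply pow_lt; lra).
  apply Rlt_le, Rdiv_lt_0_compat; lra.
Qed.

(* Each partial fraction 8 t^2 / (odd_pi k ^ 2 - 4 t^2) is a geometric series
   in t^2; summing over k first and over the power of t second is legitimate
   since all terms are nonnegative. *)
Theorem t_tan_series t : Rabs t < PI / 2 ->
  infinite_sum (fun n => tan_coef (S n) * t ^ (2 * n + 2)) (t * tan t).
Proof.
  intros Ht. pose proof PI_RGT_0.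
  set (a k n := 8 * 4 ^ n / odd_pi k ^ (2 * n + 2) * t ^ (2 * n + 2)).
  assert (a_nonneg : forall k n, 0 <= a k n).
  { intros k n. pose proof (PI_le_odd_pi k). unfold a. apply Rmult_le_pos.
    - apply Rlt_le, Rdiv_lt_0_compat; [apply Rmult_lt_0_compat; [lra | apply pow_lt; lra]|].
      apply pow_lt. lra.
    - replace (2 * n + 2)%nat with (2 * (n + 1))%nat by lia. rewrite pow_mult. apply pow_le. nra. }
  assert (a_sum : forall k, infinite_sum (a k) (t * (8 * t / (odd_pi k ^ 2 - 4 * t ^ 2)))).
  { intros k. pose proof (odd_pi_sq_gt t Ht k). pose proof (PI_le_odd_pi k).
    assert (Hq : Rabs (4 * t ^ 2 / odd_pi k ^ 2) < 1).
    { rewrite Rabs_right.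
      - apply Rmult_lt_reg_r with (odd_pi k ^ 2); [apply pow_lt; lra|]. field_simplify; lra.
      - apply Rle_ge, Rmult_le_pos; [nra | apply Rlt_le, Rinv_0_lt_compat, pow_lt; lra]. }
    pose proof (is_series_geom _ Hq) as G. apply is_series_Reals in G.
    replace (t * (8 * t / (odd_pi k ^ 2 - 4 * t ^ 2)))
      with (8 * t ^ 2 / odd_pi k ^ 2 * / (1 - 4 * t ^ 2 / odd_pi k ^ 2)) by (field; lra).
    eapply infinite_sum_ext; [|exact (infinite_sum_scal (8 * t ^ 2 / odd_pi k ^ 2) _ _ G)].
    intros n. unfold a. rewrite (pow_add (odd_pi k)), (pow_add t), !pow_mult. unfold Rdiv.
    rewrite !Rpow_mult_distr, pow_inv.
    field. split; [lra | apply pow_nonzero, pow_nonzero; lra]. }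
  destruct (infinite_sum_swap_nonneg a _ _ a_nonneg a_sum
              (infinite_sum_scal t _ _ (tan_partial_fractions t Ht))) as [c [Hc1 Hc2]].
  eapply infinite_sum_ext; [|exact Hc2]. intros n.
  apply (uniqueness_sum (fun k => a k n)); [apply Hc1|].
  rewrite Rmult_comm. unfold a.
  apply (infinite_sum_ext (fun k => t ^ (2 * n + 2) * (8 * 4 ^ n / odd_pi k ^ (2 * n + 2))));
    [intros; ring|].
  apply infinite_sum_scal, tan_coef_sum.
Qed.

Definition spread_even (a : nat -> R) n := if Nat.even n then a (Nat.div2 n) else 0.
Definition spread_odd (a : nat -> R) n := if Nat.even n then 0 else a (Nat.div2 n).

Lemma spread_even_even a p : spread_even a (2 * p) = a p.
Proof. unfold spread_even. now rewrite Nat.even_even, Nat.div2_double. Qed.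

Lemma spread_even_odd a p : spread_even a (2 * p + 1) = 0.
Proof. unfold spread_even. now rewrite Nat.even_odd. Qed.

Lemma spread_odd_even a p : spread_odd a (2 * p) = 0.
Proof. unfold spread_odd. now rewrite Nat.even_even. Qed.

Lemma spread_odd_odd a p : spread_odd a (2 * p + 1) = a p.
Proof. unfold spread_odd. now rewrite Nat.even_odd, Nat.div2_odd'. Qed.

Lemma is_pseries_zero x : is_pseries (fun _ => 0) x 0.
Proof.
  apply is_pseries_R, is_series_Reals.
  eapply infinite_sum_ext; [|apply infinite_sum_zero]. intros; simpl; ring.
Qed.

Lemma is_pseries_spread_even a x l : is_pseries a (x ^ 2) l -> is_pseries (spread_even a) x l.
Proof.
  intros H. replace l with (l + x * 0) by ring. apply is_pseries_odd_even.
  - eapply is_pseries_ext; [|exact H]. intros n. now rewrite spread_even_even.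
  - eapply is_pseries_ext; [|apply is_pseries_zero]. intros n. now rewrite spread_even_odd.
Qed.

Lemma is_pseries_spread_odd a x l : is_pseries a (x ^ 2) l -> is_pseries (spread_odd a) x (x * l).
Proof.
  intros H. replace (x * l) with (0 + x * l) by ring. apply is_pseries_odd_even.
  - eapply is_pseries_ext; [|apply is_pseries_zero]. intros n. now rewrite spread_odd_even.
  - eapply is_pseries_ext; [|exact H]. intros n. now rewrite spread_odd_odd.
Qed.

Lemma infinite_sum_single m c : infinite_sum (fun n => if Nat.eqb n m then c else 0) c.
Proof.
  intros e He. exists m. intros n Hn.
  assert (H : forall N, sum_f_R0 (fun n => if Nat.eqb n m then c else 0) N
                        = if Nat.leb m N then c else 0).
  { induction N as [|N IH]; cbn [sum_f_R0]; [now destruct m|]. rewrite IH.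
    destruct (Nat.leb_spec m N), (Nat.leb_spec m (S N)), (Nat.eqb_spec (S N) m);
      try lia; ring. }
  rewrite H. destruct (Nat.leb_spec m n); [|lia].
  unfold Rdist. rewrite Rminus_diag, Rabs_R0. lra.
Qed.

Lemma summable_bounded f l : infinite_sum f l -> exists M, forall n, Rabs (f n) <= M.
Proof.
  intros H. assert (H0 : is_lim_seq f 0).
  { apply ex_series_lim_0. exists l. now apply is_series_Reals. }
  apply is_lim_seq_Reals in H0. destruct (H0 1 Rlt_0_1) as [N HN].
  set (g k := Rabs (f k)).
  assert (g_nonneg : forall k, 0 <= g k) by (intros; apply Rabs_pos).
  exists (psum g N + 1). intros n. pose proof (psum_nonneg g N (fun k _ => g_nonneg k)).
  destruct (le_lt_dec N n) as [Hn|Hn].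
  - specialize (HN n Hn). unfold R_dist in HN. rewrite Rminus_0_r in HN. lra.
  - pose proof (psum_add g (S n) (N - S n)) as E. replace (S n + (N - S n))%nat with N in E by lia.
    change (psum g (S n)) with (psum g n + g n) in E.
    pose proof (psum_nonneg g n (fun k _ => g_nonneg k)).
    pose proof (psum_nonneg (fun k => g (S n + k)%nat) (N - S n) (fun k _ => g_nonneg _)).
    fold (g n). lra.
Qed.

Lemma CV_radius_ge_abs a r l : is_pseries a r l -> Rbar_le (Rabs r) (CV_radius a).
Proof.
  intros H. apply (proj1 (CV_radius_bounded a)).
  apply is_pseries_R, is_series_Reals, summable_bounded in H. destruct H as [M HM].
  exists M. intros n.
  rewrite Rabs_mult, (Rabs_right (Rabs r ^ n)) by (apply Rle_ge, pow_le, Rabs_pos).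
  rewrite RPow_abs, <- Rabs_mult. apply HM.
Qed.

Lemma CV_radius_gt_abs a r l y :
  is_pseries a r l -> Rabs y < Rabs r -> Rbar_lt (Rabs y) (CV_radius a).
Proof.
  intros H Hy. apply CV_radius_ge_abs in H. destruct (CV_radius a); simpl in *; auto. lra.
Qed.

Lemma PS_mult_eq_of_pseries (a b c : nat -> R) (fa fb : R -> R) r :
  0 < r -> a O * b O = c O ->
  (forall x, 0 < Rabs x < r -> is_pseries a x (fa x)) ->
  (forall x, 0 < Rabs x < r -> is_pseries b x (fb x)) ->
  (forall x, 0 < Rabs x < r -> is_pseries c x (fa x * fb x)) ->
  forall n, PS_mult a b n = c n.
Proof.
  intros Hr H0 Ha Hb Hc n.
  assert (Hr2 : 0 < Rabs (r / 2) < r) by (rewrite Rabs_right; lra).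
  assert (radius : forall d f y, (forall x, 0 < Rabs x < r -> is_pseries d x (f x)) ->
            Rabs y < r -> Rbar_lt (Rabs y) (CV_radius d)).
  { intros d f y Hd Hy. pose proof (Rabs_pos y).
    apply (CV_radius_gt_abs d ((Rabs y + r) / 2) (f ((Rabs y + r) / 2)));
      [apply Hd|]; rewrite (Rabs_right ((Rabs y + r) / 2)); lra. }
  assert (Hr0 : Rabs 0 < r) by (rewrite Rabs_R0; lra).
  apply PSeries_ext_recip.
  - pose proof (is_pseries_mult a b (r / 2) _ _ (Ha _ Hr2) (Hb _ Hr2)
      (radius a fa _ Ha (proj2 Hr2)) (radius b fb _ Hb (proj2 Hr2))) as Hm.
    apply CV_radius_ge_abs in Hm. eapply Rbar_lt_le_trans; [|exact Hm]. simpl. lra.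
  - rewrite <- Rabs_R0. now apply (radius c (fun x => fa x * fb x)).
  - exists (mkposreal r Hr). intros x Hx.
    change (Rabs (x + - 0) < r) in Hx. rewrite Ropp_0, Rplus_0_r in Hx.
    destruct (Req_dec x 0) as [->|Hx0].
    + rewrite !PSeries_0. unfold PS_mult. simpl. lra.
    + assert (Hx' : 0 < Rabs x < r) by (split; [now apply Rabs_pos_lt | lra]).
      rewrite PSeries_mult by ((apply (radius a fa) || apply (radius b fb)); auto).
      now rewrite (is_pseries_unique _ _ _ (Ha x Hx')), (is_pseries_unique _ _ _ (Hb x Hx')),
        (is_pseries_unique _ _ _ (Hc x Hx')).
Qed.

Lemma PS_mult_cancel_r (h k e : nat -> R) : e O <> 0 ->
  (forall n, PS_mult h e n = PS_mult k e n) -> forall n, h n = k n.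
Proof.
  intros He H.
  assert (Hle : forall n i, (i <= n)%nat -> h i = k i).
  { induction n as [|n IH]; intros i Hi.
    - replace i with O by lia. specialize (H O). unfold PS_mult in H. simpl in H.
      now apply Rmult_eq_reg_r with (e O).
    - destruct (Nat.eq_dec i (S n)) as [->|]; [|apply IH; lia].
      specialize (H (S n)). unfold PS_mult in H. rewrite !tech5, Nat.sub_diag in H.
      rewrite (sum_eq (fun j => h j * e (S n - j)%nat) (fun j => k j * e (S n - j)%nat)) in H
        by (intros j Hj; now rewrite IH).
      apply Rmult_eq_reg_r with (e O); auto. lra. }
  intros n. now apply (Hle n).
Qed.

Definition sign_div2 n := (-1) ^ Nat.div2 n.

Lemma sign_div2_double p : sign_div2 (2 * p) = (-1) ^ p.
Proof. unfold sign_div2. now rewrite Nat.div2_double. Qed.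

(* The substitution y = i t on coefficients: on even indices sign_div2 n = i^n,
   and all the series involved are even. *)
Lemma PS_mult_substitution (g c s h e f : nat -> R) :
  (forall n, PS_mult g c n = s n) -> (forall n, PS_mult h e n = f n) ->
  (forall j, e j = 2 * sign_div2 j * c j) -> (forall n, f n = -2 * sign_div2 n * s n) ->
  (forall p, g (2 * p + 1)%nat = 0) -> (forall p, c (2 * p + 1)%nat = 0) -> e O <> 0 ->
  forall n, h n = - sign_div2 n * g n.
Proof.
  intros Hgc Hhe He Hf Hg Hc He0.
  apply (PS_mult_cancel_r h (fun n => - sign_div2 n * g n) e He0). intros n.
  rewrite Hhe, Hf, <- Hgc. unfold PS_mult. rewrite scal_sum.
  apply sum_eq. intros i Hi. rewrite He.
  destruct (Nat.Even_or_Odd i) as [[p ->]|[p ->]]; [|rewrite Hg; ring].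
  destruct (Nat.Even_or_Odd (n - 2 * p)) as [[q Hq]|[q Hq]]; rewrite Hq; [|rewrite Hc; ring].
  replace (sign_div2 n) with (sign_div2 (2 * (p + q))) by (f_equal; lia).
  rewrite !sign_div2_double, pow_add. ring.
Qed.

(** * Bernoulli numbers and the tangent coefficients *)

Lemma exp_pow y n : exp y ^ n = exp (INR n * y).
Proof.
  induction n as [|n IH]; [simpl; now rewrite Rmult_0_l, exp_0|].
  rewrite S_INR. simpl. rewrite IH, <- exp_plus. f_equal. ring.
Qed.

Lemma exp_series y : infinite_sum (fun n => / INR (fact n) * y ^ n) (exp y).
Proof. pose proof (is_exp_Reals y) as H. now apply is_pseries_R, is_series_Reals in H. Qed.

Lemma exp_opp_series y : infinite_sum (fun n => (-1) ^ n / INR (fact n) * y ^ n) (exp (- y)).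
Proof.
  eapply infinite_sum_ext; [|exact (exp_series (- y))]. intros n.
  replace (- y) with (-1 * y) by ring. rewrite Rpow_mult_distr. field. apply INR_fact_neq_0.
Qed.

Definition cosh2_coef n := / INR (fact n) + (-1) ^ n / INR (fact n).
Definition ysinh2_coef := PS_incr_1 (fun n => / INR (fact n) - (-1) ^ n / INR (fact n)).

Lemma is_pseries_cosh2 y : is_pseries cosh2_coef y (exp y + exp (- y)).
Proof.
  apply is_pseries_R, is_series_Reals.
  eapply infinite_sum_ext; [|exact (infinite_sum_plus _ _ _ _ (exp_series y) (exp_opp_series y))].
  intros n. unfold cosh2_coef. ring.
Qed.

Lemma is_pseries_ysinh2 y : is_pseries ysinh2_coef y (y * (exp y - exp (- y))).
Proof.
  apply (is_pseries_incr_1 _ y (exp y - exp (- y))), is_pseries_R, is_series_Reals.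
  eapply infinite_sum_ext; [|exact (infinite_sum_minus _ _ _ _ (exp_series y) (exp_opp_series y))].
  intros n. cbv beta. ring.
Qed.

(* For y <> 0 this is y tanh y (see [y_tanh_mul_cosh2]); it is written through
   t / (e^t - 1) at t = 2 y and t = 4 y so that the Bernoulli expansion applies. *)
Definition y_tanh y := y - 2 * y / (exp (2 * y) - 1) + 4 * y / (exp (4 * y) - 1).

Lemma y_tanh_mul_cosh2 y : y <> 0 -> y_tanh y * (exp y + exp (- y)) = y * (exp y - exp (- y)).
Proof.
  intros Hy. unfold y_tanh.
  replace (exp (2 * y)) with (exp y ^ 2) by (rewrite exp_pow; f_equal; simpl; ring).
  replace (exp (4 * y)) with (exp y ^ 4) by (rewrite exp_pow; f_equal; simpl; ring).
  rewrite exp_Ropp. pose proof (exp_pos y). set (E := exp y) in *.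
  assert (E <> 1) by (intro H1; apply Hy, exp_inv; fold E; rewrite exp_0; exact H1).
  assert (E ^ 2 - 1 <> 0) by (intro H2; nra).
  assert (E ^ 4 - 1 <> 0) by (replace (E ^ 4 - 1) with ((E ^ 2 - 1) * (E ^ 2 + 1)) by ring;
                              apply Rmult_integral_contrapositive; split; nra).
  field. repeat split; auto; lra.
Qed.

Definition t_tan_coef := spread_even tan_coef.
Definition cos_coef := spread_even cos_n.
Definition t_sin_coef := PS_incr_1 (spread_odd sin_n).

Lemma is_pseries_t_tan t : Rabs t < PI / 2 -> is_pseries t_tan_coef t (t * tan t).
Proof.
  intros Ht. apply is_pseries_spread_even, is_pseries_R, is_series_decr_1.
  match goal with |- is_series _ ?L => replace L with (t * tan t) end.
  2:{ change (t * tan t = t * tan t + - (0 * (t ^ 2) ^ 0)). ring. }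
  apply is_series_Reals. eapply infinite_sum_ext; [|now apply t_tan_series].
  intros n. cbv beta. rewrite <- pow_mult. do 2 f_equal. lia.
Qed.

Lemma is_pseries_cos t : is_pseries cos_coef t (cos t).
Proof.
  unfold cos. destruct (exist_cos (Rsqr t)) as [l Hl].
  apply is_pseries_spread_even, is_pseries_R, is_series_Reals. now rewrite <- Rsqr_pow2.
Qed.

Lemma is_pseries_t_sin t : is_pseries t_sin_coef t (t * sin t).
Proof.
  unfold sin. destruct (exist_sin (Rsqr t)) as [l Hl].
  apply (is_pseries_incr_1 _ t (t * l)), is_pseries_spread_odd, is_pseries_R, is_series_Reals.
  now rewrite <- Rsqr_pow2.
Qed.

Lemma PS_mult_t_tan_cos n : PS_mult t_tan_coef cos_coef n = t_sin_coef n.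
Proof.
  pose proof PI2_1.
  apply (PS_mult_eq_of_pseries _ _ _ (fun t => t * tan t) cos (PI / 2)); try lra.
  - unfold t_tan_coef, spread_even, t_sin_coef, PS_incr_1. simpl. change (zero : R) with 0. ring.
  - intros t Ht. apply is_pseries_t_tan. lra.
  - intros t _. apply is_pseries_cos.
  - intros t Ht. replace (t * tan t * cos t) with (t * sin t); [apply is_pseries_t_sin|].
    unfold tan. field. apply (cos_t_neq0 t). lra.
Qed.

Lemma pow_m1_sq p : (-1) ^ p * (-1) ^ p = 1.
Proof. rewrite <- pow_add. replace (p + p)%nat with (2 * p)%nat by lia. apply pow_1_even. Qed.

Lemma pow_m1_odd p : (-1) ^ (2 * p + 1) = -1.
Proof. replace (2 * p + 1)%nat with (S (2 * p)) by lia. apply pow_1_odd. Qed.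

Section BernoulliTanh.

Variable B : nat -> R.
Hypothesis HB : is_bernoulli B.

Definition y_tanh_coef n :=
  B n * (4 ^ n - 2 ^ n) / INR (fact n) + (if Nat.eqb n 1 then 1 else 0).

Lemma bernoulli_series_scaled c y : 0 < Rabs (c * y) < 2 * PI ->
  infinite_sum (fun n => B n * c ^ n / INR (fact n) * y ^ n) (c * y / (exp (c * y) - 1)).
Proof.
  intros H. eapply infinite_sum_ext; [|now apply HB]. intros n.
  cbv beta. rewrite Rpow_mult_distr. field. apply INR_fact_neq_0.
Qed.

Lemma is_pseries_y_tanh y : 0 < Rabs y < PI / 2 -> is_pseries y_tanh_coef y (y_tanh y).
Proof.
  intros Hy. apply is_pseries_R, is_series_Reals.
  assert (scaled : forall c, 0 < c <= 4 -> 0 < Rabs (c * y) < 2 * PI)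
    by (intros c Hc; rewrite Rabs_mult, Rabs_right by lra; nra).
  pose proof (bernoulli_series_scaled 2 y (scaled 2 ltac:(lra))) as H2.
  pose proof (bernoulli_series_scaled 4 y (scaled 4 ltac:(lra))) as H4.
  assert (H1 : infinite_sum (fun n => (if Nat.eqb n 1 then 1 else 0) * y ^ n) y).
  { eapply infinite_sum_ext; [|apply (infinite_sum_single 1 y)]. intros n.
    cbv beta. destruct (Nat.eqb_spec n 1) as [->|]; simpl; ring. }
  eapply infinite_sum_ext;
    [|exact (infinite_sum_plus _ _ _ _ (infinite_sum_minus _ _ _ _ H1 H2) H4)].
  intros n. unfold y_tanh_coef. field. apply INR_fact_neq_0.
Qed.

Lemma PS_mult_y_tanh_cosh2 n : PS_mult y_tanh_coef cosh2_coef n = ysinh2_coef n.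
Proof.
  pose proof PI2_1.
  apply (PS_mult_eq_of_pseries _ _ _ y_tanh (fun y => exp y + exp (- y)) (PI / 2));
    try lra; auto using is_pseries_y_tanh, is_pseries_cosh2.
  - unfold y_tanh_coef, cosh2_coef, ysinh2_coef, PS_incr_1. simpl. change (zero : R) with 0. field.
  - intros y Hy. rewrite y_tanh_mul_cosh2 by (intros ->; rewrite Rabs_R0 in Hy; lra).
    apply is_pseries_ysinh2.
Qed.

Lemma y_tanh_coef_eq n :
  y_tanh_coef n = - sign_div2 n * t_tan_coef n.
Proof.
  assert (fact_neq0 := INR_fact_neq_0).
  apply (PS_mult_substitution t_tan_coef cos_coef t_sin_coef y_tanh_coef cosh2_coef ysinh2_coef
           PS_mult_t_tan_cos PS_mult_y_tanh_cosh2).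
  - intros j. unfold cosh2_coef, cos_coef.
    destruct (Nat.Even_or_Odd j) as [[p ->]|[p ->]].
    + rewrite spread_even_even, sign_div2_double. unfold cos_n.
      rewrite pow_1_even. pose proof (pow_m1_sq p). field_simplify_eq; [nra | apply fact_neq0].
    + rewrite spread_even_odd, pow_m1_odd. field. apply fact_neq0.
  - intros [|m]; unfold ysinh2_coef, t_sin_coef, PS_incr_1; [change (zero : R) with 0; ring|].
    destruct (Nat.Even_or_Odd m) as [[p ->]|[p ->]].
    + rewrite spread_odd_even, pow_1_even. field. apply fact_neq0.
    + rewrite spread_odd_odd, pow_m1_odd. replace (S (2 * p + 1)) with (2 * (p + 1))%nat by lia.
      rewrite sign_div2_double. unfold sin_n. rewrite pow_add. pose proof (pow_m1_sq p).
      simpl. field_simplify_eq; [nra | apply fact_neq0].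
  - intros p. apply spread_even_odd.
  - intros p. apply spread_even_odd.
  - unfold cosh2_coef. simpl. lra.
Qed.

Theorem bernoulli_tan_coef p : (1 <= p)%nat ->
  2 ^ (2 * p) * (2 ^ (2 * p) - 1) * Rabs (B (2 * p)) / INR (fact (2 * p)) = tan_coef p.
Proof.
  intros Hp. pose proof (y_tanh_coef_eq (2 * p)) as H.
  unfold y_tanh_coef, t_tan_coef in H. rewrite spread_even_even, sign_div2_double in H.
  replace (Nat.eqb (2 * p) 1) with false in H by (symmetry; apply Nat.eqb_neq; lia).
  rewrite Rplus_0_r in H.
  pose proof (INR_fact_lt_0 (2 * p)).
  assert (H4 : 4 ^ (2 * p) = 2 ^ (2 * p) * 2 ^ (2 * p))
    by (rewrite <- Rpow_mult_distr; f_equal; ring).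
  assert (1 <= 2 ^ (2 * p)) by (apply pow_R1_Rle; lra).
  transitivity (Rabs (B (2 * p) * (4 ^ (2 * p) - 2 ^ (2 * p)) / INR (fact (2 * p)))).
  - unfold Rdiv. rewrite !Rabs_mult, Rabs_inv, (Rabs_right (INR _)) by lra.
    rewrite (Rabs_right (4 ^ (2 * p) - 2 ^ (2 * p))) by (rewrite H4; nra). rewrite H4. ring.
  - rewrite H, Rabs_mult, Rabs_Ropp, pow_1_abs, Rmult_1_l.
    apply Rabs_right, Rle_ge, tan_coef_nonneg.
Qed.

End BernoulliTanh.

(** * The remainder kappa_N *)

(* For D = (d PI)^2, the terms [taylor_term t d j] (j >= 1) expand
   64 t^3 / (D - 4 t^2)^2 in powers of t, and [kappa_term t d N] is the exact
   remainder after the term j = N - 1. *)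
Definition taylor_term t d j := 2 * INR j * t ^ (2 * j + 1) * (8 * 4 ^ j / (d * PI) ^ (2 * j + 2)).

Definition kappa_term t d N :=
  INR N * 2 ^ (2 * N + 4) * t ^ (2 * N + 1) / PI ^ (2 * N)
    * / (d ^ (2 * N) * (PI ^ 2 * d ^ 2 - 4 * t ^ 2))
  + 2 ^ (2 * N + 6) * t ^ (2 * N + 3) / PI ^ (2 * N)
    * / (d ^ (2 * N) * (PI ^ 2 * d ^ 2 - 4 * t ^ 2) ^ 2).

Lemma taylor_term_add_kappa_term_S t d n : 0 < d -> 0 < PI ^ 2 * d ^ 2 - 4 * t ^ 2 ->
  taylor_term t d n + kappa_term t d (S n) = kappa_term t d n.
Proof.
  intros Hd HD. pose proof PI_RGT_0. unfold taylor_term, kappa_term.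
  rewrite S_INR, (Rpow_mult_distr d PI).
  replace (2 * S n + 1)%nat with (2 * n + 3)%nat by lia.
  replace (2 * S n + 3)%nat with (2 * n + 5)%nat by lia.
  replace (2 * S n + 4)%nat with (2 * n + 6)%nat by lia.
  replace (2 * S n + 6)%nat with (2 * n + 8)%nat by lia.
  replace (2 * S n)%nat with (2 * n + 2)%nat by lia.
  replace (4 ^ n) with (2 ^ (2 * n)) by (rewrite pow_mult; f_equal; ring).
  rewrite !pow_add.
  assert (2 ^ (2 * n) <> 0) by (apply pow_nonzero; lra).
  assert (PI ^ (2 * n) <> 0) by (apply pow_nonzero; lra).
  assert (d ^ (2 * n) <> 0) by (apply pow_nonzero; lra).
  generalize dependent (2 ^ (2 * n)); generalize dependent (PI ^ (2 * n));
    generalize dependent (d ^ (2 * n)); generalize dependent (t ^ (2 * n)).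
  intros. field. rewrite Rpow_mult_distr. repeat split; lra.
Qed.

Lemma taylor_sum_add_kappa_term t d N : 0 < d -> 0 < PI ^ 2 * d ^ 2 - 4 * t ^ 2 -> (1 <= N)%nat ->
  sum_1_to (N - 1) (taylor_term t d) + kappa_term t d N
  = 64 * t ^ 3 / ((d * PI) ^ 2 - 4 * t ^ 2) ^ 2.
Proof.
  intros Hd HD HN. pose proof PI_RGT_0.
  destruct N as [|M]; [lia|]. replace (S M - 1)%nat with M by lia. clear HN.
  induction M as [|M IH].
  - unfold sum_1_to, kappa_term. simpl. field. repeat split; lra.
  - rewrite <- IH. unfold sum_1_to. rewrite seq_S, map_app, fold_right_app. cbn [fold_right map].
    replace (1 + M)%nat with (S M) by lia.
    rewrite <- (taylor_term_add_kappa_term_S t d (S M) Hd HD).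
    induction (map (taylor_term t d) (seq 1 M)); simpl; lra.
Qed.

Lemma odd_pi_eq k : odd_pi k = (2 * INR (k + 1) - 1) * PI.
Proof. unfold odd_pi. rewrite plus_INR. simpl. ring. Qed.

Section Kappa.

Variable t : R.
Hypothesis Ht : Rabs t < PI / 2.

Let d k := 2 * INR (k + 1) - 1.

Lemma odd_ge k : INR k + 1 <= d k.
Proof. unfold d. rewrite plus_INR. simpl. pose proof (pos_INR k). lra. Qed.

Lemma kappa_denominator_ge k :
  (PI ^ 2 - 4 * t ^ 2) * (INR k + 1) ^ 2 <= PI ^ 2 * d k ^ 2 - 4 * t ^ 2.
Proof.
  pose proof (odd_ge k). pose proof (pos_INR k).
  assert ((INR k + 1) ^ 2 <= d k ^ 2) by (apply pow_incr; lra).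
  assert (1 <= (INR k + 1) ^ 2) by nra.
  assert (0 <= t ^ 2) by nra. nra.
Qed.

Lemma summable_kappa N : exists S1 S2 : R,
  infinite_sum (fun k => / (d k ^ (2 * N) * (PI ^ 2 * d k ^ 2 - 4 * t ^ 2))) S1 /\
  infinite_sum (fun k => / (d k ^ (2 * N) * (PI ^ 2 * d k ^ 2 - 4 * t ^ 2) ^ 2)) S2.
Proof.
  pose proof PI_RGT_0. pose proof (t_bounds t Ht).
  assert (HP : 0 < PI ^ 2 - 4 * t ^ 2) by nra.
  assert (bound : forall q k, (1 <= q)%nat ->
    0 <= / (d k ^ (2 * N) * (PI ^ 2 * d k ^ 2 - 4 * t ^ 2) ^ q)
      <= / (PI ^ 2 - 4 * t ^ 2) ^ q * / (INR k + 1) ^ 2).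
  { intros q k Hq. pose proof (kappa_denominator_ge k). pose proof (odd_ge k).
    pose proof (pos_INR k).
    assert (1 <= d k ^ (2 * N)) by (apply pow_R1_Rle; lra).
    assert (1 <= (INR k + 1) ^ 2) by nra.
    assert (0 < PI ^ 2 * d k ^ 2 - 4 * t ^ 2) by nra.
    assert ((PI ^ 2 - 4 * t ^ 2) ^ q * (INR k + 1) ^ 2
              <= (PI ^ 2 * d k ^ 2 - 4 * t ^ 2) ^ q).
    { eapply Rle_trans; [|apply pow_incr; split; [|eassumption]; nra].
      rewrite Rpow_mult_distr. apply Rmult_le_compat_l; [apply pow_le; lra|].
      rewrite <- (pow_1 ((INR k + 1) ^ 2)) at 1. apply Rle_pow; auto. }
    assert (0 < (PI ^ 2 - 4 * t ^ 2) ^ q) by (apply pow_lt; lra).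
    assert (0 < (PI ^ 2 * d k ^ 2 - 4 * t ^ 2) ^ q) by (apply pow_lt; lra).
    split; [apply Rlt_le, Rinv_0_lt_compat, Rmult_lt_0_compat; lra|].
    assert ((PI ^ 2 * d k ^ 2 - 4 * t ^ 2) ^ q
              <= d k ^ (2 * N) * (PI ^ 2 * d k ^ 2 - 4 * t ^ 2) ^ q)
      by (rewrite <- (Rmult_1_l ((PI ^ 2 * d k ^ 2 - 4 * t ^ 2) ^ q)) at 1;
          apply Rmult_le_compat_r; lra).
    rewrite <- Rinv_mult. apply Rinv_le_contravar; [apply Rmult_lt_0_compat; lra | lra]. }
  destruct (summable_of_inv_sq_bound _ _ (fun k => bound 1%nat k (le_n 1))) as [S1 HS1].
  destruct (summable_of_inv_sq_bound _ _ (fun k => bound 2%nat k (le_S _ _ (le_n 1)))) as [S2 HS2].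
  exists S1, S2. split; [|exact HS2].
  eapply infinite_sum_ext; [|exact HS1]. intros k. cbv beta. now rewrite pow_1.
Qed.

Variable B : nat -> R.
Hypothesis HB : is_bernoulli B.

Lemma bernoulli_taylor_series j :
  infinite_sum (fun k => taylor_term t (d k) j)
    (2 * INR j * 2 ^ (2 * j + 2) * (2 ^ (2 * j + 2) - 1) * Rabs (B (2 * j + 2)%nat)
       / INR (fact (2 * j + 2)) * t ^ (2 * j + 1)).
Proof.
  pose proof (bernoulli_tan_coef B HB (S j) ltac:(lia)) as Hb.
  replace (2 * S j)%nat with (2 * j + 2)%nat in Hb by lia.
  replace (2 * INR j * 2 ^ (2 * j + 2) * (2 ^ (2 * j + 2) - 1) * Rabs (B (2 * j + 2)%nat)
             / INR (fact (2 * j + 2)) * t ^ (2 * j + 1))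
    with (2 * INR j * t ^ (2 * j + 1) * (2 ^ (2 * j + 2) * (2 ^ (2 * j + 2) - 1)
             * Rabs (B (2 * j + 2)%nat) / INR (fact (2 * j + 2))))
    by (field; apply INR_fact_neq_0).
  rewrite Hb. eapply infinite_sum_ext; [|apply infinite_sum_scal, tan_coef_sum].
  intros k. unfold taylor_term, d. rewrite <- odd_pi_eq. reflexivity.
Qed.

End Kappa.

Theorem mainTheorem12 (B : nat -> R) (HB : is_bernoulli B) (N : nat) (HN : (1 <= N)%nat)
  (t : R) (Ht : Rabs t < PI / 2) :
  exists S1 S2 : R,
    infinite_sum (fun k => / ((2 * INR (k + 1) - 1) ^ (2 * N)
                   * (PI ^ 2 * (2 * INR (k + 1) - 1) ^ 2 - 4 * t ^ 2))) S1 /\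
    infinite_sum (fun k => / ((2 * INR (k + 1) - 1) ^ (2 * N)
                   * (PI ^ 2 * (2 * INR (k + 1) - 1) ^ 2 - 4 * t ^ 2) ^ 2)) S2 /\
    t * / (cos t) ^ 2 - tan t =
      sum_1_to (N - 1) (fun j =>
        2 * INR j * 2 ^ (2 * j + 2) * (2 ^ (2 * j + 2) - 1) * Rabs (B (2 * j + 2)%nat)
          / INR (fact (2 * j + 2)) * t ^ (2 * j + 1))
      + (INR N * 2 ^ (2 * N + 4) * t ^ (2 * N + 1) / PI ^ (2 * N) * S1
         + 2 ^ (2 * N + 6) * t ^ (2 * N + 3) / PI ^ (2 * N) * S2).
Proof.
  destruct (summable_kappa t Ht N) as [S1 [S2 [HS1 HS2]]].
  exists S1, S2. split; [exact HS1|]. split; [exact HS2|].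
  apply (uniqueness_sum (fun k => 64 * t ^ 3 / (odd_pi k ^ 2 - 4 * t ^ 2) ^ 2));
    [now apply tsec2_minus_tan_partial_fractions|].
  pose proof (infinite_sum_plus _ _ _ _
    (infinite_sum_fold_right _ _ (seq 1 (N - 1)) (bernoulli_taylor_series t B HB))
    (infinite_sum_plus _ _ _ _
      (infinite_sum_scal (INR N * 2 ^ (2 * N + 4) * t ^ (2 * N + 1) / PI ^ (2 * N)) _ _ HS1)
      (infinite_sum_scal (2 ^ (2 * N + 6) * t ^ (2 * N + 3) / PI ^ (2 * N)) _ _ HS2))) as H.
  eapply infinite_sum_ext; [|exact H]. intros k.
  pose proof (odd_ge k). pose proof (kappa_denominator_ge t k). pose proof (pos_INR k).
  pose proof (t_bounds t Ht). pose proof PI_RGT_0. cbv beta in *.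
  assert (0 < PI ^ 2 - 4 * t ^ 2) by nra.
  rewrite odd_pi_eq, <- (taylor_sum_add_kappa_term t _ N); [reflexivity | lra | nra | exact HN].
Qed.
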